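(* Let $\Gamma=(G,w,\ell)$ be a tropical curve and $P\in\mathcal C_G$. Then the class $[T_P]$ contains no effective divisor (i.e. $r_\Gamma(T_P)=-1$) if and only if $P=\emptyset$ and $\Gamma$ is pure (i.e. $w(v)=0$ for all $v\in V$).
   Context: A tropical curve is a triple $\Gamma=(G,w,\ell)$ where $G=(V,E)$ is a finite connected graph (loops and multiple edges allowed), $w\colon V\to\mathbb Z_{\ge 0}$ with $2w(v)-2+\deg_G(v)>0$ for all $v$ (loops count twice), and $\ell\colon E\to\mathbb R_{>0}$; it is viewed as a metric space with edges segments (circles for loops) of length $\ell(e)$; $p_e$ is the mid-point of $e$. Divisors, rational functions and linear equivalence are the usual tropical ones; the rank $r_\Gamma(D)$ equals $-1$ exactly when $D$ is not linearly equivalent to any effective divisor. $\mathcal C_G$ is the set of $P\subseteq E$ such that every vertex has even degree in the subgraph spanned by $P$ (loops counting twice). For $P\in\mathcal C_G$, $$T_P:=\sum_{v\in V}\Big(\frac{\deg_P(v)}{2}-1+w(v)\Big)v+\sum_{e\in E\setminus P}p_e,$$ whose class is a theta-characteristic of $\Gamma$. *)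

From HB Require Import structures.
From mathcomp Require Import all_boot all_order all_algebra.
From mathcomp Require Import reals.
From Stdlib Require List.

Set Implicit Arguments.
Unset Strict Implicit.
Unset Printing Implicit Defensive.

Import Order.TTheory GRing.Theory Num.Theory.
Local Open Scope ring_scope.

(* Points of a metric graph: a vertex, or an interior point of an edge e at
   distance t from the source of e (0 < t < len e). *)
Inductive tpoint (V E R : Type) := TVert of V | TEdge of E & R.

Section Tropical.
Variables (V E : finType) (src tgt : E -> V).

(* the underlying graph G = (V,E): each edge e has endpoints src e, tgt e;
   loops are edges with src e = tgt e *)
Definition adjb : rel V := fun u v =>
  [exists e, ((src e == u) && (tgt e == v)) || ((src e == v) && (tgt e == u))].

Definition graph_connected : Prop := forall u v : V, connect adjb u v.

(* degree in G, loops counted twice *)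
Definition degG (v : V) : nat :=
  (#|[set e | src e == v]| + #|[set e | tgt e == v]|)%N.

Definition degP (P : {set E}) (v : V) : nat :=
  (#|[set e in P | src e == v]| + #|[set e in P | tgt e == v]|)%N.

Definition in_CG (P : {set E}) : Prop := forall v, ~~ odd (degP P v).

Definition stable_weight (w : V -> nat) : Prop :=
  forall v, (2 < 2 * w v + degG v)%N.

Variable R : realType.
Variable len : E -> R.

Local Notation pt := (tpoint V E R).

Definition valid_pt (x : pt) : Prop :=
  match x with TVert _ => True | TEdge e t => 0 < t < len e end.

Definition is_divisor (D : pt -> int) : Prop :=
  exists s : seq pt, forall x, valid_pt x -> D x != 0 -> List.In x s.

Definition effective (D : pt -> int) : Prop :=
  forall x, valid_pt x -> (0 <= D x)%R.

Definition edge_restr (f : pt -> R) (e : E) (t : R) : R :=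
  if t == 0 then f (@TVert V E R (src e))
  else if t == len e then f (@TVert V E R (tgt e))
  else f (@TEdge V E R e t).

(* rational function: continuous, piecewise linear with integer slopes and
   finitely many pieces: on each edge there is a subdivision
   0 = t_0 < t_1 < ... < t_k = len e with f affine of integer slope on each
   [t_i, t_(i+1)] *)
Definition is_rat_fun (f : pt -> R) : Prop :=
  forall e, exists (ts : seq R) (s : seq int),
    [/\ path <%R 0 ts, last 0 ts = len e &
        forall i : nat, (i < size ts)%N -> forall t : R,
          (0 :: ts)`_i <= t <= ts`_i ->
          edge_restr f e t = edge_restr f e (0 :: ts)`_i
                             + (s`_i)%:~R * (t - (0 :: ts)`_i)].

Definition slope_right (f : pt -> R) (e : E) (t : R) (k : int) : Prop :=
  exists2 eps : R, 0 < eps & forall u, 0 < u < eps ->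
    edge_restr f e (t + u) = edge_restr f e t + k%:~R * u.

Definition slope_left (f : pt -> R) (e : E) (t : R) (k : int) : Prop :=
  exists2 eps : R, 0 < eps & forall u, 0 < u < eps ->
    edge_restr f e (t - u) = edge_restr f e t - k%:~R * u.

(* D = div(f) = sum_x ord_x(f) x, ord_x(f) = sum of outgoing slopes at x *)
Definition is_div_of (f : pt -> R) (D : pt -> int) : Prop :=
  forall x, valid_pt x ->
  match x with
  | TEdge e t => exists kr kl : int,
      [/\ slope_right f e t kr, slope_left f e t kl & D x = kr - kl]
  | TVert v => exists kout kin : E -> int,
      (forall e, slope_right f e 0 (kout e) /\ slope_left f e (len e) (kin e))
      /\ D x = \sum_(e | src e == v) kout e - \sum_(e | tgt e == v) kin e
  end.

Definition lin_equiv (D D' : pt -> int) : Prop :=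
  exists f, is_rat_fun f /\ is_div_of f (fun x => D x - D' x).

Definition rank_neg1 (D : pt -> int) : Prop :=
  ~ exists D', [/\ is_divisor D', effective D' & lin_equiv D D'].

Definition theta_div (w : V -> nat) (P : {set E}) : pt -> int :=
  fun x => match x with
  | TVert v => Posz (degP P v %/ 2)%N - 1 + Posz (w v)
  | TEdge e t => if (e \notin P) && (t == len e / 2) then 1 else 0
  end.

End Tropical.

From HB Require Import structures.
From mathcomp Require Import all_boot all_order all_algebra.
From mathcomp Require Import reals.
From mathcomp Require Import lra zify ring.
From Stdlib Require List.
Set Implicit Arguments.
Unset Strict Implicit.
Unset Printing Implicit Defensive.
Import Order.TTheory GRing.Theory Num.Theory.
Local Open Scope ring_scope.

(* (<=) With P empty and w = 0, T_P has -1 at every vertex and +1 at every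
   edge midpoint.  If T_P - div(f) >= 0, look at a vertex v0 minimizing f:
   ord_v0(f) <= -1, so f starts decreasing along some edge at v0; along an
   edge the slope of f can only increase at the midpoint, by at most 1, so
   f keeps decreasing and the other end has a smaller value: contradiction.

   (=>) Otherwise the set S of vertices where T_P is nonnegative (w(v) > 0
   or v on an edge of P) is nonempty.  Let h be half the distance to S; on
   each edge put the "ramp" f that is constant except for slope +-1 on a
   segment ending or starting at the midpoint.  Then T_P - div(f) >= 0. *)

Section RealInterval.
Variable R : realType.
Implicit Types (F : R -> R) (a b t : R) (k : int).

(* The edge condition of is_rat_fun is
   exactly this property of the restriction of f to an edge, on [0, len e]. *)
Definition piecewise_linear F a b : Prop :=
  exists (ts : seq R) (s : seq int),
    [/\ path <%R a ts, last a ts = b &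
        forall i : nat, (i < size ts)%N -> forall t : R,
          (a :: ts)`_i <= t <= ts`_i ->
          F t = F (a :: ts)`_i + (s`_i)%:~R * (t - (a :: ts)`_i)].

Lemma piecewise_linear_ext F G a b :
  (forall t, F t = G t) -> piecewise_linear F a b -> piecewise_linear G a b.
Proof.
move=> FG [ts [s [p l H]]]; exists ts, s; split=> // i its t t_in.
by rewrite -!FG; apply: H.
Qed.

Lemma piecewise_linear_cons F a c b k :
  a <= c -> c <= b -> a < b ->
  (a < c -> forall t, a <= t <= c -> F t = F a + k%:~R * (t - a)) ->
  (c < b -> piecewise_linear F c b) -> piecewise_linear F a b.
Proof.
move=> ac cb ab Faff Frest.
have [ac'|ca] := ltP a c; last first.
  have eca : c = a by apply/eqP; rewrite eq_le ca ac.
  by move: Frest; rewrite eca; apply.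
have [cb'|bc] := ltP c b.
  have [ts [s [p l H]]] := Frest cb'.
  exists (c :: ts), (k :: s); split => //=; first by rewrite ac'.
  by case=> [|i] /= Hi t Ht; [exact: Faff | exact: H].
have ecb : c = b by apply/eqP; rewrite eq_le cb bc.
exists [:: b], [:: k]; split => //=; first by rewrite -ecb ac'.
by case=> [|i] //= _ t Ht; apply: Faff => //; rewrite ecb.
Qed.

Definition right_slope F t k : Prop :=
  exists2 eps : R, 0 < eps & forall u, 0 < u < eps -> F (t + u) = F t + k%:~R * u.
Definition left_slope F t k : Prop :=
  exists2 eps : R, 0 < eps & forall u, 0 < u < eps -> F (t - u) = F t - k%:~R * u.

Lemma right_slope_local F G t k d :
  right_slope F t k -> 0 < d -> (forall s, t <= s <= t + d -> F s = G s) ->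
  right_slope G t k.
Proof.
move=> [eps eps0 HF] d0 FG; exists (Order.min eps d); first by rewrite lt_min eps0 d0.
move=> u /andP[u0]; rewrite lt_min => /andP[ue ud].
by rewrite -!FG ?HF ?u0 ?ue //; apply/andP; split; lra.
Qed.

Lemma left_slope_local F G t k d :
  left_slope F t k -> 0 < d -> (forall s, t - d <= s <= t -> F s = G s) ->
  left_slope G t k.
Proof.
move=> [eps eps0 HF] d0 FG; exists (Order.min eps d); first by rewrite lt_min eps0 d0.
move=> u /andP[u0]; rewrite lt_min => /andP[ue ud].
by rewrite -!FG ?HF ?u0 ?ue //; apply/andP; split; lra.
Qed.

Lemma small_common_point (eps d : R) :
  0 < eps -> 0 < d -> exists u, [/\ 0 < u, u < eps & u <= d].
Proof.
move=> eps0 d0; exists (Order.min eps d / 2).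
have : 0 < Order.min eps d by rewrite lt_min eps0 d0.
have : Order.min eps d <= eps by rewrite ge_min lexx.
have : Order.min eps d <= d by rewrite ge_min lexx orbT.
by split; lra.
Qed.

Lemma right_slope_affine F t k k' d :
  right_slope F t k -> 0 < d ->
  (forall u, 0 < u <= d -> F (t + u) = F t + k'%:~R * u) -> k = k'.
Proof.
move=> [eps eps0 HF] d0 Haff; have [u [u0 ue ud]] := small_common_point eps0 d0.
have := HF u; rewrite u0 ue Haff ?u0 ?ud // => /(_ isT) /addrI.
by move/(mulIf (lt0r_neq0 u0))/intr_inj.
Qed.

Lemma left_slope_affine F t k k' d :
  left_slope F t k -> 0 < d ->
  (forall u, 0 < u <= d -> F (t - u) = F t - k'%:~R * u) -> k = k'.
Proof.
move=> [eps eps0 HF] d0 Haff; have [u [u0 ue ud]] := small_common_point eps0 d0.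
have := HF u; rewrite u0 ue Haff ?u0 ?ud // => /(_ isT) /addrI /oppr_inj.
by move/(mulIf (lt0r_neq0 u0))/intr_inj.
Qed.

Section Pieces.
Variables (F : R -> R) (a : R) (ts : seq R) (s : seq int).
Hypotheses (ts_path : path <%R a ts)
  (F_pieces : forall i : nat, (i < size ts)%N -> forall t : R,
     (a :: ts)`_i <= t <= ts`_i -> F t = F (a :: ts)`_i + (s`_i)%:~R * (t - (a :: ts)`_i)).
Let x i := (a :: ts)`_i.

Lemma piece_lt i : (i < size ts)%N -> x i < x i.+1.
Proof. exact: (pathP 0 ts_path). Qed.

Lemma piece_right_slope i k : (i < size ts)%N -> right_slope F (x i) k -> k = s`_i.
Proof.
move=> ik Hk; apply: (right_slope_affine Hk (d := x i.+1 - x i)).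
  by rewrite subr_gt0 piece_lt.
move=> u /andP[u0 ud]; rewrite (F_pieces ik); first by rewrite /x; congr (_ + _ * _); lra.
by rewrite /x /= in ud *; apply/andP; split; lra.
Qed.

Lemma piece_left_slope i k : (i < size ts)%N -> left_slope F (x i.+1) k -> k = s`_i.
Proof.
move=> ik Hk; have xi := piece_lt ik.
apply: (left_slope_affine Hk (d := x i.+1 - x i)); first by rewrite subr_gt0.
move=> u /andP[u0 ud]; rewrite /x /= in xi ud *.
rewrite (F_pieces ik (t := ts`_i - u)); last by apply/andP; split; lra.
by rewrite (F_pieces ik (t := ts`_i)) ?lexx ?ltW //; ring.
Qed.
End Pieces.

Section SlopeChain.
Variables (n : nat) (x Fx : nat -> R) (s : nat -> int) (c : R).
Hypotheses (x_lt : forall i, (i < n)%N -> x i < x i.+1)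
  (Fx_step : forall i, (i < n)%N -> Fx i.+1 = Fx i + (s i)%:~R * (x i.+1 - x i))
  (s_jump : forall i, (0 < i < n)%N -> s i - s i.-1 <= (c == x i)).

Let above i : int := c <= x i.

(* s_i - [c <= x_i] is nonincreasing: the only possible jump of s is
   compensated by the step of the indicator at c. *)
Lemma slope_minus_indicator_noninc i j :
  (i <= j < n)%N -> s j - above j <= s i - above i.
Proof.
move=> /andP[]; elim: j => [|j IH] ij jn; first by case: i ij.
case: (ltngtP i j.+1) ij => // [ij|<-] _; last by [].
have {}IH := IH ij (ltnW jn).
have xj := x_lt (ltnW jn).
have step : s j.+1 - s j <= above j.+1 - above j.
  have := s_jump (i := j.+1); rewrite jn /= => /(_ isT) sj; rewrite /above.
  case: eqP sj => [cx|_] sj.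
    by rewrite cx lexx (_ : (x j.+1 <= x j) = false) /=; [lia | rewrite leNgt xj].
  have [cxj|_] := boolP (c <= x j); last by case: (c <= x j.+1); lia.
  by rewrite (le_trans cxj (ltW xj)); lia.
by lia.
Qed.

Lemma slope_noninc_but_one i j : (i <= j < n)%N -> s j <= s i + 1.
Proof.
move=> ijn; have := slope_minus_indicator_noninc ijn.
by rewrite /above; case: (c <= x i); case: (c <= x j); lia.
Qed.

Lemma chain_decreasing : (0 < n)%N -> s 0%N <= -1 -> Fx n < Fx 0%N.
Proof.
move=> n0 s0.
suff : forall j, (0 < j <= n)%N -> Fx j < Fx 0%N by apply; rewrite n0 leqnn.
elim=> // j IH /andP[_ jn]; have dx : 0 < x j.+1 - x j by rewrite subr_gt0 x_lt.
rewrite Fx_step //; case: j IH jn dx => [|j] IH jn dx.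
  have : (s 0%N)%:~R <= (-1 : R) by rewrite -(intrN R 1) ler_int.
  by nra.
have : (s j.+1)%:~R <= (0 : R).
  by rewrite lerz0; have := slope_noninc_but_one (i := 0) (j := j.+1); rewrite jn; lia.
by have := IH (ltnW jn); nra.
Qed.

Lemma chain_increasing : (0 < n)%N -> 1 <= s n.-1 -> Fx 0%N < Fx n.
Proof.
move=> n0 sn.
have s_nneg j : (j < n)%N -> (0 : R) <= (s j)%:~R.
  by move=> jn; rewrite ler0z; have := slope_noninc_but_one (i := j) (j := n.-1); lia.
have mono : forall j, (j < n)%N -> Fx 0%N <= Fx j.
  elim=> [|j IH] jn //; rewrite Fx_step ?(ltnW jn) //.
  have := x_lt (ltnW jn); have := s_nneg _ (ltnW jn); have := IH (ltnW jn); nra.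
have last_lt : (n.-1 < n)%N by rewrite ltn_predL.
have := mono _ last_lt; have := x_lt last_lt; have := Fx_step last_lt.
rewrite prednK // => ->.
have : (1 : R) <= (s n.-1)%:~R by rewrite ler1z.
by nra.
Qed.
End SlopeChain.

Lemma piecewise_linear_monotone F a b c :
  a < b -> piecewise_linear F a b ->
  (forall t, a < t < b -> exists kr kl,
     [/\ right_slope F t kr, left_slope F t kl & kr - kl <= (c == t)]) ->
  (forall k, right_slope F a k -> k <= -1 -> F b < F a) /\
  (forall k, left_slope F b k -> 1 <= k -> F a < F b).
Proof.
move=> ab [ts [s [ts_path ts_last F_pieces]]] interior.
pose x i := (a :: ts)`_i.
have x_lt := piece_lt ts_path.
have n0 : (0 < size ts)%N.
  by case: ts {ts_path F_pieces x x_lt} ts_last => //= ab'; rewrite ab' ltxx in ab.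
have xn : x (size ts) = b by rewrite -ts_last (last_nth 0).
have x_mono : forall i j, (i < j <= size ts)%N -> x i < x j.
  move=> i j /andP[ij jn].
  apply: (sorted_ltn_nth lt_trans 0 (ts_path : sorted <%R (a :: ts))) => //.
  by rewrite inE /=; lia.
have Fx_step i : (i < size ts)%N ->
    F (x i.+1) = F (x i) + (s`_i)%:~R * (x i.+1 - x i).
  by move=> ilt; apply: F_pieces; rewrite // lexx ltW // x_lt.
have s_jump i : (0 < i < size ts)%N -> s`_i - s`_i.-1 <= (c == x i).
  move=> /andP[i0 ilt].
  have [|kr [kl [Hr Hl Hk]]] := interior (x i).
    by rewrite -{1}[a]/(x 0%N) -xn !x_mono //; apply/andP; split=> //; exact: ltnW.
  have i1 : (i.-1 < size ts)%N by lia.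
  have Hl' : left_slope F (x i.-1.+1) kl by rewrite prednK.
  rewrite -(piece_right_slope ts_path F_pieces ilt Hr).
  by rewrite -(piece_left_slope ts_path F_pieces i1 Hl').
have last_lt : ((size ts).-1 < size ts)%N by rewrite ltn_predL.
split=> k Hk k_sign.
- have := chain_decreasing x_lt Fx_step s_jump n0.
  by rewrite xn -(piece_right_slope ts_path F_pieces n0 Hk); apply.
- have Hk' : left_slope F (x (size ts).-1.+1) k by rewrite prednK // xn.
  have := chain_increasing x_lt Fx_step s_jump n0.
  by rewrite xn -(piece_left_slope ts_path F_pieces last_lt Hk'); apply.
Qed.

Definition clamp (p q t : R) : R := if t <= p then p else if t <= q then t else q.
Definition ramp a k (p q t : R) : R := a + k%:~R * (clamp p q t - p).

Definition ramp_rslope k (p q t : R) : int := if (p <= t) && (t < q) then k else 0.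
Definition ramp_lslope k (p q t : R) : int := if (p < t) && (t <= q) then k else 0.

Lemma clamp_lo (p q t : R) : t <= p -> clamp p q t = p.
Proof. by rewrite /clamp => ->. Qed.

Lemma clamp_mid (p q t : R) : p <= t <= q -> clamp p q t = t.
Proof.
move=> /andP[pt tq]; rewrite /clamp tq; case: ifP => // tp.
by apply/eqP; rewrite eq_le tp pt.
Qed.

Lemma clamp_hi (p q t : R) : p <= q -> q <= t -> clamp p q t = q.
Proof.
move=> pq qt; rewrite /clamp; case: ifP => [tp|_].
  by apply/eqP; rewrite eq_le pq (le_trans qt tp).
by case: ifP => // tq; apply/eqP; rewrite eq_le tq qt.
Qed.

Section Ramp.
Variables (a : R) (k : int) (p q : R).
Hypothesis pq : p <= q.

Lemma ramp_right_slope t : right_slope (ramp a k p q) t (ramp_rslope k p q t).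
Proof.
rewrite /ramp_rslope /ramp; have [tp|pt] := ltP t p.
  exists (p - t); first lra.
  by move=> u /andP[u0 ue]; rewrite !clamp_lo ?mul0r ?addr0 //; lra.
have [tq|qt] := ltP t q.
  exists (q - t); first lra.
  move=> u /andP[u0 ue]; rewrite !clamp_mid /=; first ring.
  - by apply/andP; split; lra.
  - by apply/andP; split; lra.
exists 1; first lra.
by move=> u /andP[u0 ue]; rewrite andbF !clamp_hi ?mul0r ?addr0 //; lra.
Qed.

Lemma ramp_left_slope t : left_slope (ramp a k p q) t (ramp_lslope k p q t).
Proof.
rewrite /ramp_lslope /ramp; have [pt|tp] := ltP p t; last first.
  exists 1; first lra.
  by move=> u /andP[u0 ue]; rewrite !clamp_lo ?mul0r ?subr0 //; lra.
have [tq|qt] := leP t q.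
  exists (t - p); first lra.
  move=> u /andP[u0 ue]; rewrite !clamp_mid /=; first ring.
  - by apply/andP; split; lra.
  - by apply/andP; split; lra.
exists (t - q); first lra.
by move=> u /andP[u0 ue]; rewrite andbF !clamp_hi ?mul0r ?subr0 //; lra.
Qed.

Lemma ramp_piecewise_linear (L : R) :
  0 <= p -> q <= L -> 0 < L -> piecewise_linear (ramp a k p q) 0 L.
Proof.
move=> p0 qL L0.
have flat t1 t2 : t1 <= t2 -> (t2 <= p) || (q <= t1) -> ramp a k p q t2 = ramp a k p q t1.
  move=> t12 /orP[t2p|qt1]; rewrite /ramp.
    by rewrite !clamp_lo //; exact: le_trans t12 t2p.
  by rewrite !clamp_hi // (le_trans qt1 t12).
apply: (@piecewise_linear_cons _ 0 p L 0) => //; first exact: le_trans pq qL.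
  by move=> _ t /andP[t0 tp]; rewrite mul0r addr0 (flat 0) // tp.
move=> pL; apply: (@piecewise_linear_cons _ p q L k) => //.
  move=> _ t /andP[pt tq]; rewrite /ramp (@clamp_mid p q t) ?pt ?tq //.
  by rewrite clamp_lo // subrr mulr0 addr0.
move=> qL'; apply: (@piecewise_linear_cons _ q L L 0) => //; last by rewrite ltxx.
by move=> _ t /andP[qt tL]; rewrite mul0r addr0 (flat q) // lexx orbT.
Qed.
End Ramp.

Lemma ramp_slope_jump k (p q t : R) : p <= q ->
  ramp_rslope k p q t - ramp_lslope k p q t = k * ((t == p)%:Z - (t == q)%:Z).
Proof.
rewrite /ramp_rslope /ramp_lslope => pq.
have [->|tp] := eqVneq t p.
  rewrite lexx ltxx /= subr0.
  by case: eqP => [->|/eqP pq']; rewrite ?ltxx ?subrr ?mulr0 // lt_neqAle pq' pq subr0 mulr1.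
have [tq|tq] := eqVneq t q.
  rewrite tq in tp *; rewrite lexx ltxx andbF andbT lt_neqAle eq_sym tp pq /=; ring.
rewrite (le_eqVlt p t) (eq_sym p t) (negbTE tp) (le_eqVlt t q) (negbTE tq) /=.
by rewrite subrr mulr0.
Qed.

(* The ramp used on an edge of length L joining potentials a and b with
   |a - b| <= L/2: it has slope -1 or +1 on the segment of length |a - b|
   that ends (if b <= a) or starts (if a < b) at the midpoint L/2. *)
Definition ramp_sign (a b : R) : int := if b <= a then -1 else 1.
Definition ramp_start (a b L : R) : R := if b <= a then L / 2 + b - a else L / 2.
Definition ramp_stop (a b L : R) : R := if b <= a then L / 2 else L / 2 + b - a.
Definition edge_ramp (a b L : R) : R -> R :=
  ramp a (ramp_sign a b) (ramp_start a b L) (ramp_stop a b L).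
Definition edge_rslope (a b L : R) : R -> int :=
  ramp_rslope (ramp_sign a b) (ramp_start a b L) (ramp_stop a b L).
Definition edge_lslope (a b L : R) : R -> int :=
  ramp_lslope (ramp_sign a b) (ramp_start a b L) (ramp_stop a b L).

Lemma edge_ramp_range (a b L : R) : a - b <= L / 2 -> b - a <= L / 2 ->
  [/\ 0 <= ramp_start a b L, ramp_start a b L <= ramp_stop a b L & ramp_stop a b L <= L].
Proof. by rewrite /ramp_start /ramp_stop => ? ?; case: (leP b a) => ?; split; lra. Qed.

Lemma edge_ramp_ends (a b L : R) : a - b <= L / 2 -> b - a <= L / 2 ->
  edge_ramp a b L 0 = a /\ edge_ramp a b L L = b.
Proof.
move=> ab ba; have [s0 ss sL] := edge_ramp_range ab ba.
rewrite /edge_ramp /ramp clamp_lo // clamp_hi // subrr mulr0 addr0; split=> //.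
rewrite /ramp_sign /ramp_start /ramp_stop; case: (leP b a) => ?.
  by rewrite mulN1r; lra.
by rewrite mul1r; lra.
Qed.

Lemma edge_rslope0_le0 (a b L : R) : 0 < L -> a - b <= L / 2 ->
  edge_rslope a b L 0 <= 0.
Proof.
rewrite /edge_rslope /ramp_rslope /ramp_sign /ramp_start /ramp_stop => ? ?.
by case: (leP b a) => ?; case: ifP => // /andP[? ?]; exfalso; lra.
Qed.

Lemma edge_rslope0_tight (a b L : R) : 0 < L -> b + L / 2 = a ->
  edge_rslope a b L 0 = -1.
Proof.
rewrite /edge_rslope /ramp_rslope /ramp_sign /ramp_start /ramp_stop => ? ?.
case: (leP b a) => ?; last by exfalso; lra.
by case: ifP => // /negbT; rewrite negb_and -!ltNge => /orP[] ?; exfalso; lra.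
Qed.

Lemma edge_lslopeL_ge0 (a b L : R) : 0 < L -> b - a <= L / 2 ->
  0 <= edge_lslope a b L L.
Proof.
rewrite /edge_lslope /ramp_lslope /ramp_sign /ramp_start /ramp_stop => ? ?.
by case: (leP b a) => ?; case: ifP => // /andP[? ?]; exfalso; lra.
Qed.

Lemma edge_lslopeL_tight (a b L : R) : 0 < L -> a + L / 2 = b ->
  edge_lslope a b L L = 1.
Proof.
rewrite /edge_lslope /ramp_lslope /ramp_sign /ramp_start /ramp_stop => ? ?.
case: (leP b a) => ?; first by exfalso; lra.
by case: ifP => // /negbT; rewrite negb_and -!ltNge => /orP[] ?; exfalso; lra.
Qed.

Lemma edge_slope_jump (a b L t : R) : a - b <= L / 2 -> b - a <= L / 2 ->
  edge_rslope a b L t - edge_lslope a b L t <= (L / 2 == t).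
Proof.
move=> ab ba; have [_ ss _] := edge_ramp_range ab ba.
rewrite /edge_rslope /edge_lslope ramp_slope_jump // (eq_sym (L / 2)).
rewrite /ramp_sign /ramp_start /ramp_stop; case: (leP b a) => _.
  by case: (t == L / 2); case: (t == _); lia.
by case: (t == L / 2); case: (t == _); lia.
Qed.

Lemma edge_slope_flat (a L t : R) : edge_rslope a a L t - edge_lslope a a L t = 0.
Proof.
rewrite /edge_rslope /edge_lslope ramp_slope_jump /ramp_start /ramp_stop lexx addrK //.
by rewrite subrr mulr0.
Qed.
End RealInterval.

Section Potential.
Variables (V E : finType) (src tgt : E -> V) (R : realType) (c : E -> R).
Hypotheses (c_ge0 : forall e, 0 <= c e) (connected : graph_connected src tgt).

Definition endp (b : bool) (e : E) : V := if b then src e else tgt e.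

Lemma crossing_edge (X : {set V}) x y :
  x \in X -> y \notin X -> exists e b, endp b e \in X /\ endp (~~ b) e \notin X.
Proof.
move=> xX yX.
have [/existsP [[e b] /andP[]] | /existsPn no_cross] :=
  boolP [exists d : E * bool, (endp d.2 d.1 \in X) && (endp (~~ d.2) d.1 \notin X)].
  by exists e, b.
have closedX : closed (adjb src tgt) X.
  have same_side e b : (endp b e \in X) = (endp (~~ b) e \in X).
    apply/idP/idP => H; apply/negPn/negP => H'.
      by move/(_ (e, b)): no_cross; rewrite /= H H'.
    by move/(_ (e, ~~ b)): no_cross; rewrite /= negbK H H'.
  move=> u v /existsP [e /orP[] /andP[/eqP <- /eqP <-]].
  - exact: (same_side e true).
  - exact: esym (same_side e true).
by move: yX; rewrite -(closed_connect closedX (connected x y)) xX.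
Qed.

(* Invariant of Dijkstra's algorithm computing the c-distance h to S: on the
   settled set X the potential h vanishes on S, is c-Lipschitz along edges,
   is attained along a tight edge from a settled vertex outside S, and no
   settled value exceeds the cost of reaching an unsettled vertex. *)
Definition settled (S X : {set V}) (h : V -> R) : Prop :=
  [/\ S \subset X,
      {in S, forall v, h v = 0},
      forall e b, endp b e \in X -> endp (~~ b) e \in X ->
        h (endp b e) - h (endp (~~ b) e) <= c e,
      {in X, forall v, v \notin S -> exists e b,
        [/\ endp b e = v, endp (~~ b) e \in X & h (endp (~~ b) e) + c e = h v]}
    & forall z e b, z \in X -> endp b e \in X -> endp (~~ b) e \notin X ->
        h z <= h (endp b e) + c e].

Lemma settled_init S : settled S S (fun=> 0).
Proof.
split=> // [e b _ _|v -> //|z e b _ _ _]; rewrite ?subrr ?add0r; exact: c_ge0.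
Qed.

(* One Dijkstra step: settle the unsettled end y0 of a crossing edge of
   minimal cost m, with potential m. *)
Lemma settled_step S X h x y : settled S X h -> x \in X -> y \notin X ->
  exists y0 h', y0 \notin X /\ settled S (y0 |: X) h'.
Proof.
move=> [SX h_S h_lip h_tight h_front] xX yX.
have [e1 [b1 [in1 out1]]] := crossing_edge xX yX.
pose cross := [pred d : E * bool | (endp d.2 d.1 \in X) && (endp (~~ d.2) d.1 \notin X)].
pose cost (d : E * bool) := h (endp d.2 d.1) + c d.1.
have cross1 : cross (e1, b1) by rewrite /cross /= in1 out1.
case: (arg_minP cost cross1) => -[e0 b0] /andP[/= in0 out0] min0.
set y0 := endp (~~ b0) e0 in out0; set m := cost (e0, b0).
have m_min e b : endp b e \in X -> endp (~~ b) e \notin X -> m <= h (endp b e) + c e.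
  by move=> h1 h2; apply: (min0 (e, b)); rewrite /cross /= h1 h2.
have below_m z : z \in X -> h z <= m by move=> zX; apply: h_front.
pose h' v := if v == y0 then m else h v.
have h'X v : v \in X -> h' v = h v.
  by move=> vX; rewrite /h'; case: eqP => // ev; rewrite -ev vX in out0.
exists y0, h'; split=> //; split.
- exact: subset_trans SX (subsetUr _ _).
- by move=> v vS; rewrite h'X ?h_S // (subsetP SX).
- move=> e b; rewrite !in_setU1.
  case: (eqVneq (endp b e) y0) => [Eu|Nu]; case: (eqVneq (endp (~~ b) e) y0) => [Ew|Nw] //= uX wX.
  + by rewrite /h' Eu Ew eqxx subrr c_ge0.
  + rewrite /h' Eu eqxx (negbTE Nw).
    by have := m_min e (~~ b) wX; rewrite negbK Eu => /(_ out0); lra.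
  + by rewrite /h' Ew eqxx (negbTE Nu); have := below_m _ uX; have := c_ge0 e; lra.
  + by rewrite !h'X //; apply: h_lip.
- move=> v; rewrite in_setU1 => /orP[/eqP ->|vX] vS.
    exists e0, (~~ b0); rewrite negbK h'X // /h' eqxx.
    by split=> //; rewrite in_setU1 in0 orbT.
  have [e [b [E1 E2 E3]]] := h_tight v vX vS.
  by exists e, b; rewrite !h'X // in_setU1 E2 orbT.
- move=> z e b; rewrite !in_setU1 negb_or => zX uX /andP[Nw wX].
  have z_y0 : z \in X -> h' z <= m by move=> zX'; rewrite h'X // below_m.
  case/orP: uX => [/eqP Eu|uX].
    rewrite {2}/h' Eu eqxx; have := c_ge0 e.
    case/orP: zX => [/eqP ->|/z_y0]; last by lra.
    by rewrite /h' eqxx; lra.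
  rewrite (h'X _ uX); case/orP: zX => [/eqP ->|zX]; first by rewrite /h' eqxx m_min.
  by rewrite h'X // h_front.
Qed.

Lemma settled_all S X h : S != set0 -> settled S X h -> exists h', settled S setT h'.
Proof.
case/set0Pn=> x0 x0S; move Hn: #|~: X| => n; elim: n X h Hn => [|n IH] X h cardX hX.
  move/cards0_eq/(congr1 (@setC _)): cardX; rewrite setCK setC0 => eX.
  by exists h; rewrite -eX.
have [y] : exists y, y \in ~: X by apply/card_gt0P; rewrite cardX.
rewrite inE => yX.
have x0X : x0 \in X by case: hX => /subsetP SX *; exact: SX.
have [y0 [h' [y0X h'set]]] := settled_step hX x0X yX.
apply: (IH _ _ _ h'set).
have -> : ~: (y0 |: X) = ~: X :\ y0 by apply/setP=> v; rewrite !inE negb_or andbC.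
by move: cardX; rewrite (cardsD1 y0) inE y0X; lia.
Qed.

Lemma potential_exists S : S != set0 ->
  exists h : V -> R, [/\ {in S, forall v, h v = 0},
    forall e b, h (endp b e) - h (endp (~~ b) e) <= c e &
    forall v, v \notin S -> exists e b, endp b e = v /\ h (endp (~~ b) e) + c e = h v].
Proof.
move=> S0; have [h [_ h_S h_lip h_tight _]] := settled_all S0 (settled_init S).
exists h; split=> // [e b|v vS]; first by apply: h_lip; rewrite inE.
by have [e [b [? _ ?]]] := h_tight v (in_setT v) vS; exists e, b.
Qed.
End Potential.

Lemma mem_In (T : eqType) (x : T) (s : seq T) : x \in s -> List.In x s.
Proof. by elim: s => //= y s IH; rewrite inE => /orP[/eqP ->|/IH]; [left|right]. Qed.

Lemma sumB_neg (I : finType) (P Q : pred I) (x y : I -> int) :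
  \sum_(i | P i) x i - \sum_(i | Q i) y i <= -1 ->
  exists i, (P i && (x i <= -1)) || (Q i && (1 <= y i)).
Proof.
move=> neg; apply/existsP/contraT => /existsPn none.
have sx : 0 <= \sum_(i | P i) x i.
  by apply: sumr_ge0 => i Pi; move: (none i); rewrite Pi /= negb_or => /andP[]; lia.
have sy : \sum_(i | Q i) y i <= 0.
  by apply: sumr_le0 => i Qi; move: (none i); rewrite Qi /= negb_or andbC => /andP[]; lia.
by lia.
Qed.

Section Tropical.
Variables (R : realType) (V E : finType) (src tgt : E -> V) (len : E -> R).
Local Notation pt := (tpoint V E R).
Local Notation vert := (@TVert V E R).
Local Notation edge_pt := (@TEdge V E R).

Lemma edge_restr_ends f e : 0 < len e ->
  edge_restr src tgt len f e 0 = f (vert (src e)) /\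
  edge_restr src tgt len f e (len e) = f (vert (tgt e)).
Proof. by move=> L0; rewrite /edge_restr eqxx (negbTE (lt0r_neq0 L0)) eqxx. Qed.

Lemma rat_fun_edge_monotone f D e :
  0 < len e -> is_rat_fun src tgt len f -> is_div_of src tgt len f D ->
  (forall t, 0 < t < len e -> D (edge_pt e t) <= (len e / 2 == t)) ->
  (forall k, slope_right src tgt len f e 0 k -> k <= -1 ->
     f (vert (tgt e)) < f (vert (src e))) /\
  (forall k, slope_left src tgt len f e (len e) k -> 1 <= k ->
     f (vert (src e)) < f (vert (tgt e))).
Proof.
move=> L0 frat fdiv Dmid; have [<- <-] := edge_restr_ends f L0.
apply: piecewise_linear_monotone => // t t_in.
have [kr [kl [Hr Hl Dt]]] := fdiv (edge_pt e t) t_in.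
by exists kr, kl; split=> //; rewrite -Dt; apply: Dmid.
Qed.

Lemma degP_set0 v : degP src tgt set0 v = 0%N.
Proof.
rewrite /degP; apply/eqP; rewrite addn_eq0 !cards_eq0.
by apply/andP; split; apply/eqP/setP => e; rewrite !inE.
Qed.

(* If P is empty and Gamma is pure, T_P is not equivalent to an effective
   divisor: at a vertex v0 where f is minimal, -1 = T_P(v0) >= ord_v0(f)
   forces an edge along which f starts decreasing, and f keeps decreasing
   along that edge, so its other end has a smaller value than v0. *)
Lemma pure_theta_rank_neg1 w :
  (0 < #|V|)%N -> (forall e, 0 < len e) -> (forall v, w v = 0%N) ->
  rank_neg1 src tgt len (theta_div src tgt len w set0).
Proof.
move=> V0 L0 w0 [D' [_ D'_eff [f [frat fdiv]]]].
case/card_gt0P: V0 => x0 _.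
case: (arg_minP (fun v => f (vert v)) (isT : predT x0)) => v0 _ v0_min.
have [kout [kin [slopes ord_v0]]] := fdiv (vert v0) I.
have := D'_eff (vert v0) I; rewrite /= degP_set0 w0 /= in ord_v0 => D'v0.
have [e] : exists e, ((src e == v0) && (kout e <= -1)) || ((tgt e == v0) && (1 <= kin e)).
  by apply: sumB_neg; rewrite -ord_v0; lia.
have mid_bound t : 0 < t < len e ->
    theta_div src tgt len w set0 (edge_pt e t) - D' (edge_pt e t) <= (len e / 2 == t).
  move=> t_in; have := D'_eff (edge_pt e t) t_in.
  by rewrite /= inE /= eq_sym; case: (len e / 2 == t) => /=; lia.
have [decr incr] := rat_fun_edge_monotone (L0 e) frat fdiv mid_bound.
have [slope0 slopeL] := slopes e.
case/orP=> [/andP[/eqP src_e kneg] | /andP[/eqP tgt_e kpos]].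
- have := decr _ slope0 kneg; rewrite src_e.
  by rewrite ltNge v0_min.
- have := incr _ slopeL kpos; rewrite tgt_e.
  by rewrite ltNge v0_min.
Qed.

Lemma is_divisorB (D1 D2 : pt -> int) :
  is_divisor len D1 -> is_divisor len D2 -> is_divisor len (fun x => D1 x - D2 x).
Proof.
move=> [s1 supp1] [s2 supp2]; exists (List.app s1 s2) => x x_ok Dx.
apply: List.in_or_app; case: (eqVneq (D1 x) 0) => [D1x|/(supp1 _ x_ok)]; last by left.
by right; apply: supp2 => //; move: Dx; rewrite D1x sub0r oppr_eq0.
Qed.

Lemma theta_is_divisor w P : is_divisor len (theta_div src tgt len w P).
Proof.
exists (List.app (List.map vert (enum V))
                 (List.map (fun e => edge_pt e (len e / 2)) (enum E))).
move=> [v|e t] _ Dx; apply: List.in_or_app.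
  by left; apply: List.in_map; apply: mem_In; rewrite mem_enum.
right; move: Dx => /=; case: ifP => // /andP[_ /eqP ->] _.
by apply: (List.in_map (fun e => edge_pt e (len e / 2))); apply: mem_In; rewrite mem_enum.
Qed.

Definition ramp_fun (h : V -> R) (x : pt) : R :=
  match x with
  | TVert v => h v
  | TEdge e t => edge_ramp (h (src e)) (h (tgt e)) (len e) t
  end.

Definition edge_rslopes (h : V -> R) (e : E) : R -> int :=
  edge_rslope (h (src e)) (h (tgt e)) (len e).
Definition edge_lslopes (h : V -> R) (e : E) : R -> int :=
  edge_lslope (h (src e)) (h (tgt e)) (len e).

Definition ramp_div (h : V -> R) (x : pt) : int :=
  match x with
  | TVert v => \sum_(e | src e == v) edge_rslopes h e 0
               - \sum_(e | tgt e == v) edge_lslopes h e (len e)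
  | TEdge e t => edge_rslopes h e t - edge_lslopes h e t
  end.

Definition half_lipschitz (h : V -> R) : Prop :=
  forall e, h (src e) - h (tgt e) <= len e / 2 /\ h (tgt e) - h (src e) <= len e / 2.

Section RampFun.
Variable h : V -> R.

Lemma edge_restr_ramp_fun e t : half_lipschitz h ->
  edge_restr src tgt len (ramp_fun h) e t = edge_ramp (h (src e)) (h (tgt e)) (len e) t.
Proof.
move=> hlip; have [ab ba] := hlip e; have [e0 eL] := edge_ramp_ends ab ba.
rewrite /edge_restr.
have [->|_] := eqVneq t 0; first by rewrite e0.
by have [->|_] := eqVneq t (len e); rewrite ?eL.
Qed.

Lemma ramp_fun_rat : half_lipschitz h -> (forall e, 0 < len e) ->
  is_rat_fun src tgt len (ramp_fun h).
Proof.
move=> hlip L0 e; have [ab ba] := hlip e; have [s0 ss sL] := edge_ramp_range ab ba.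
apply: (piecewise_linear_ext (fun t => esym (edge_restr_ramp_fun e t hlip))).
exact: ramp_piecewise_linear.
Qed.

Lemma ramp_fun_slopes e t : half_lipschitz h ->
  slope_right src tgt len (ramp_fun h) e t (edge_rslopes h e t) /\
  slope_left src tgt len (ramp_fun h) e t (edge_lslopes h e t).
Proof.
move=> hlip; have [ab ba] := hlip e; have [_ ss _] := edge_ramp_range ab ba.
have same s : edge_ramp (h (src e)) (h (tgt e)) (len e) s =
              edge_restr src tgt len (ramp_fun h) e s by rewrite edge_restr_ramp_fun.
split.
- exact: (right_slope_local (ramp_right_slope _ _ ss t) ltr01 (fun s _ => same s)).
- exact: (left_slope_local (ramp_left_slope _ _ ss t) ltr01 (fun s _ => same s)).
Qed.

Lemma ramp_fun_div : half_lipschitz h -> is_div_of src tgt len (ramp_fun h) (ramp_div h).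
Proof.
move=> hlip [v|e t] _ /=.
  exists (fun e => edge_rslopes h e 0), (fun e => edge_lslopes h e (len e)); split=> //.
  by move=> e; split; apply ramp_fun_slopes.
by have [Hr Hl] := ramp_fun_slopes e t hlip; exists (edge_rslopes h e t), (edge_lslopes h e t).
Qed.

Lemma ramp_div_is_divisor : half_lipschitz h -> is_divisor len (ramp_div h).
Proof.
move=> hlip.
pose corners e := [:: edge_pt e (ramp_start (h (src e)) (h (tgt e)) (len e));
                      edge_pt e (ramp_stop (h (src e)) (h (tgt e)) (len e))].
exists (List.app (List.map vert (enum V)) (List.flat_map corners (enum E))).
move=> [v|e t] _ Dx; apply: List.in_or_app.
  by left; apply: List.in_map; apply: mem_In; rewrite mem_enum.
right; apply/List.in_flat_map; exists e; split; first by apply: mem_In; rewrite mem_enum.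
have [->|tp] := eqVneq t (ramp_start (h (src e)) (h (tgt e)) (len e)); first by left.
have [->|tq] := eqVneq t (ramp_stop (h (src e)) (h (tgt e)) (len e)); first by right; left.
have [ab ba] := hlip e; have [_ ss _] := edge_ramp_range ab ba.
by move: Dx; rewrite /= /edge_rslopes /edge_lslopes /edge_rslope /edge_lslope ramp_slope_jump //
  (negbTE tp) (negbTE tq) subrr mulr0 eqxx.
Qed.

Lemma ramp_div_vertex_le0 v : half_lipschitz h -> (forall e, 0 < len e) ->
  ramp_div h (vert v) <= 0.
Proof.
move=> hlip L0; rewrite /= subr_le0.
have out_le0 : \sum_(e | src e == v) edge_rslopes h e 0 <= 0.
  by apply: sumr_le0 => e _; apply: edge_rslope0_le0 => //; case: (hlip e).
have in_ge0 : 0 <= \sum_(e | tgt e == v) edge_lslopes h e (len e).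
  by apply: sumr_ge0 => e _; apply: edge_lslopeL_ge0 => //; case: (hlip e).
exact: le_trans out_le0 in_ge0.
Qed.

Lemma ramp_div_vertex_tight v e b : half_lipschitz h -> (forall e, 0 < len e) ->
  endp src tgt b e = v -> h (endp src tgt (~~ b) e) + len e / 2 = h v ->
  ramp_div h (vert v) <= -1.
Proof.
move=> hlip L0 ev tight.
have out_le0 (P : pred E) : \sum_(i | P i) edge_rslopes h i 0 <= 0.
  by apply: sumr_le0 => i _; apply: edge_rslope0_le0 => //; case: (hlip i).
have in_ge0 (P : pred E) : 0 <= \sum_(i | P i) edge_lslopes h i (len i).
  by apply: sumr_ge0 => i _; apply: edge_lslopeL_ge0 => //; case: (hlip i).
rewrite /=; case: b ev tight => /= <- tight.
- rewrite (bigD1 e) //= {1}/edge_rslopes edge_rslope0_tight //.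
  by rewrite -addrA gerDl subr_le0 (le_trans (out_le0 _) (in_ge0 _)).
- rewrite [X in _ - X](bigD1 e) //= {1}/edge_lslopes edge_lslopeL_tight //.
  by rewrite opprD addrCA gerDl subr_le0 (le_trans (out_le0 _) (in_ge0 _)).
Qed.

Lemma ramp_div_edge e t : half_lipschitz h ->
  ramp_div h (edge_pt e t) <= (len e / 2 == t).
Proof. by move=> hlip; have [ab ba] := hlip e; exact: edge_slope_jump. Qed.

Lemma ramp_div_edge_flat e t : h (src e) = h (tgt e) -> ramp_div h (edge_pt e t) = 0.
Proof. by rewrite /= /edge_rslopes /edge_lslopes => ->; exact: edge_slope_flat. Qed.
End RampFun.

Lemma is_div_of_ext f (D D' : pt -> int) :
  (forall x, D x = D' x) -> is_div_of src tgt len f D -> is_div_of src tgt len f D'.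
Proof. by move=> DD' fD [v|e t] x_ok; have := fD _ x_ok; rewrite /= DD'. Qed.

Lemma half_even_pos n : ~~ odd n -> (0 < n)%N -> (1 <= n %/ 2)%N.
Proof.
move=> n_even n_pos; have : (n %% 2 = 0)%N by rewrite modn2 (negbTE n_even).
by lia.
Qed.

(* Unless P is empty and Gamma is pure, T_P ~ T_P - div(f) >= 0 for the ramp
   function f of the potential h = half the distance to the set S of vertices
   where T_P is nonnegative (those with w(v) > 0 or on an edge of P).  Off S,
   T_P = -1 is compensated by a tight edge towards S; the only positive
   inner values of div(f) are +1 at midpoints of edges not in P, where T_P
   has a point too; edges of P join vertices of S, on which f is flat. *)
Lemma theta_equiv_effective w P :
  (forall e, 0 < len e) -> graph_connected src tgt -> in_CG src tgt P ->
  ~ (P = set0 /\ forall v, w v = 0%N) ->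
  exists D', [/\ is_divisor len D', effective len D' &
                 lin_equiv src tgt len (theta_div src tgt len w P) D'].
Proof.
move=> L0 connected P_even not_pure.
pose S := [set v | (0 < degP src tgt P v)%N || (0 < w v)%N].
have P_ends e : e \in P -> src e \in S /\ tgt e \in S.
  move=> eP; rewrite !inE /degP !addn_gt0 !card_gt0.
  by split; apply/orP; left; apply/orP; [left|right]; apply/set0Pn; exists e; rewrite !inE eP eqxx.
have S0 : S != set0.
  apply: contra_notN not_pure => /eqP S0; split.
    apply/setP=> e; rewrite inE; apply/negbTE/negP => /P_ends[+ _].
    by rewrite S0 inE.
  by move=> v; apply/eqP; rewrite -leqn0 leqNgt; move/setP/(_ v): S0; rewrite !inE => /norP[].
have c_ge0 e : 0 <= len e / 2 by have := L0 e; lra.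
have [h [h_S h_lip h_tight]] := potential_exists c_ge0 connected S0.
have hlip : half_lipschitz h by move=> e; split; [exact: (h_lip e true) | exact: (h_lip e false)].
exists (fun x => theta_div src tgt len w P x - ramp_div h x); split.
- exact: is_divisorB (theta_is_divisor _ _) (ramp_div_is_divisor hlip).
- move=> [v|e t] x_ok; rewrite subr_ge0.
  + have [vS|vS] := boolP (v \in S).
      apply: le_trans (ramp_div_vertex_le0 v hlip L0) _.
      move: vS; rewrite inE /= => /orP[deg_pos|w_pos]; last by lia.
      by have := half_even_pos (P_even v) deg_pos; lia.
    have [e [b [ev tight]]] := h_tight v vS.
    apply: le_trans (ramp_div_vertex_tight hlip L0 ev tight) _.
    by move: vS; rewrite inE /= negb_or -!leqNgt !leqn0 => /andP[/eqP-> /eqP->].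
  + have [eP|eP] := boolP (e \in P).
      have [/h_S hs /h_S ht] := P_ends e eP.
      by rewrite ramp_div_edge_flat ?hs ?ht //= eP.
    rewrite /= eP /= eq_sym; have := ramp_div_edge e t hlip.
    by case: (len e / 2 == t).
- exists (ramp_fun h); split; first exact: ramp_fun_rat.
  apply: is_div_of_ext (ramp_fun_div hlip) => x.
  by rewrite opprB addrC subrK.
Qed.
End Tropical.

Theorem theorem3p6 (R : realType) (V E : finType) (src tgt : E -> V)
    (w : V -> nat) (len : E -> R) (P : {set E}) :
  (0 < #|V|)%N ->
  graph_connected src tgt ->
  stable_weight src tgt w ->
  (forall e, 0 < len e) ->
  in_CG src tgt P ->
  rank_neg1 src tgt len (theta_div src tgt len w P)
  <-> (P = set0 /\ forall v, w v = 0%N).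
Proof.
move=> V0 connected _ L0 P_even; split; last first.
  by move=> [-> w0]; exact: pure_theta_rank_neg1.
move=> no_effective.
have [|not_pure] := boolP ((P == set0) && [forall v, w v == 0%N]).
  by case/andP=> /eqP -> /forallP w0; split=> // v; apply/eqP.
exfalso; apply/no_effective/theta_equiv_effective => // -[P0 w0].
by move: not_pure; rewrite P0 eqxx /=; apply/negP/negPn/forallP => v; rewrite w0.
Qed.
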